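(* Let $g:[a,b]\to\mathbb R$ be increasing and left-continuous at every point of $(a,b)$, and let $f:[a,b]\to\mathbb R$ be $g$-Lipschitz continuous with Lipschitz constant $H$. Then $f^B$ is $g^B$-Lipschitz continuous with Lipschitz constant $H$. Furthermore, if $f$ is increasing, then $f^C$ is $g^C$-Lipschitz continuous with Lipschitz constant $H$.
   Context: For a function $\varphi:[a,b]\to\mathbb R$ having right limits, $\Delta^+\varphi(t)=\varphi(t^+)-\varphi(t)$, its jump part is $\varphi^B(t)=\sum_{s\in[a,t)}\Delta^+\varphi(s)$ and its continuous part is $\varphi^C=\varphi-\varphi^B$ (applied to both $f$ and $g$). For functions $u,v$ on $[a,b]$, $u$ is $v$-Lipschitz continuous with constant $H$ if $|u(t)-u(s)|\le H|v(t)-v(s)|$ for all $t,s\in[a,b]$. *)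

From Stdlib Require Import Reals Lra List ClassicalEpsilon.
Import ListNotations.
Open Scope R_scope.

Definition v_lipschitz (a b : R) (u v : R -> R) (H : R) : Prop :=
  forall t s, a <= t <= b -> a <= s <= b -> Rabs (u t - u s) <= H * Rabs (v t - v s).

Definition nondecreasing_on (a b : R) (phi : R -> R) : Prop :=
  forall s t, a <= s -> s <= t -> t <= b -> phi s <= phi t.

Definition left_continuous_at (phi : R -> R) (t : R) : Prop :=
  forall eps, 0 < eps -> exists delta, 0 < delta /\
    forall x, t - delta < x <= t -> Rabs (phi x - phi t) < eps.

Definition is_right_lim (b : R) (phi : R -> R) (s L : R) : Prop :=
  forall eps, 0 < eps -> exists delta, 0 < delta /\
    forall x, s < x < s + delta -> x <= b -> Rabs (phi x - L) < eps.

(* phi(s^+) (a chosen right limit; unique and existent under the hypotheses) *)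
Definition right_lim (b : R) (phi : R -> R) (s : R) : R :=
  epsilon (inhabits 0) (fun L => is_right_lim b phi s L).

Definition right_jump (b : R) (phi : R -> R) (s : R) : R :=
  right_lim b phi s - phi s.

(* unconditional (summable-family) sum of x over the set P *)
Definition has_usum (P : R -> Prop) (x : R -> R) (L : R) : Prop :=
  forall eps, 0 < eps -> exists F0 : list R,
    NoDup F0 /\ Forall P F0 /\
    forall F : list R, NoDup F -> Forall P F -> incl F0 F ->
      Rabs (fold_right Rplus 0 (map x F) - L) < eps.

(* jump part: phi^B(t) = sum_{s in [a,t)} Delta^+ phi (s) *)
Definition jump_part (a b : R) (phi : R -> R) (t : R) : R :=
  epsilon (inhabits 0)
    (fun L => has_usum (fun s => a <= s < t) (right_jump b phi) L).

(* continuous part: phi^C = phi - phi^B *)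
Definition cont_part (a b : R) (phi : R -> R) (t : R) : R :=
  phi t - jump_part a b phi t.

(* Because g is nondecreasing and f is g-Lipschitz with constant H, both H g - f and
   H g + f are nondecreasing. A nondecreasing U has right limits and nonnegative right
   jumps, and its jumps at finitely many points of [s, t) add up to at most U t - U s;
   so the jump sums exist, and U^B(t) - U^B(s) is the sum of the jumps over [s, t).
   Applied to H g -/+ f this gives |Δf| <= H Δg pointwise, hence the first claim; applied
   to H g - f, f and g it gives 0 <= f^C(t) - f^C(s) <= H (g^C(t) - g^C(s)). *)
From Stdlib Require Import Reals Lra Lia List Wf_nat ClassicalEpsilon.
Import ListNotations.
Open Scope R_scope.

Definition lsum (x : R -> R) (l : list R) : R := fold_right Rplus 0 (map x l).

Lemma lsum_app x l1 l2 : lsum x (l1 ++ l2) = lsum x l1 + lsum x l2.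
Proof. unfold lsum; induction l1 as [|z l1 IH]; cbn; [ring|]. rewrite IH; ring. Qed.

Lemma lsum_lincomb c d x y l :
  lsum (fun z => c * x z + d * y z) l = c * lsum x l + d * lsum y l.
Proof. unfold lsum; induction l as [|z l IH]; cbn; [ring|]. rewrite IH; ring. Qed.

Lemma lsum_ext x y l : (forall z, In z l -> x z = y z) -> lsum x l = lsum y l.
Proof.
  unfold lsum; induction l as [|z l IH]; intros E; cbn; [reflexivity|].
  rewrite (E z (or_introl eq_refl)), IH; [reflexivity|].
  intros w Hw; apply E; right; exact Hw.

Qed.

Lemma lsum_nonneg x l : (forall z, In z l -> 0 <= x z) -> 0 <= lsum x l.
Proof.
  unfold lsum; induction l as [|z l IH]; intros E; cbn; [lra|].
  assert (0 <= x z) by (apply E; left; auto).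
  assert (0 <= fold_right Rplus 0 (map x l)) by (apply IH; intros; apply E; right; auto).
  lra.
Qed.

Lemma lsum_incl_le x l1 l2 : NoDup l1 -> incl l1 l2 ->
  (forall z, In z l2 -> 0 <= x z) -> lsum x l1 <= lsum x l2.
Proof.
  revert l2; induction l1 as [|z l1 IH]; intros l2 N I E.
  - apply lsum_nonneg, E.
  - inversion N as [|? ? Nz N1]; subst.
    destruct (in_split z l2 (I z (or_introl eq_refl))) as [k1 [k2 ->]].
    assert (Hk : lsum x l1 <= lsum x (k1 ++ k2)).
    { apply IH; auto.
      - intros w Hw. assert (Hw2 := I w (or_intror Hw)).
        apply in_app_or in Hw2 as [?|[->|?]]; apply in_or_app; tauto.
      - intros w Hw. apply E. apply in_app_or in Hw as [?|?]; apply in_or_app; cbn; tauto. }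
    rewrite lsum_app in Hk |- *. unfold lsum in *; cbn; lra.
Qed.

Lemma exists_max_in (l : list R) : l <> [] -> exists m, In m l /\ forall z, In z l -> z <= m.
Proof.
  induction l as [|z l IH]; intros Hl; [contradiction|].
  destruct l as [|z' l'].
  - exists z. split; [left; auto|]. intros w [->|[]]; lra.
  - destruct (IH ltac:(discriminate)) as [m [Hm Hmax]].
    destruct (Rle_dec z m).
    + exists m. split; [right; auto|]. intros w [->|Hw]; auto.
    + exists z. split; [left; auto|]. intros w [->|Hw]; [lra|]. specialize (Hmax w Hw). lra.
Qed.

Lemma common_NoDup_superlist (P : R -> Prop) l1 l2 : Forall P l1 -> Forall P l2 ->
  exists F, NoDup F /\ Forall P F /\ incl l1 F /\ incl l2 F.
Proof.
  intros F1 F2. exists (nodup Req_EM_T (l1 ++ l2)).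
  split; [apply NoDup_nodup|]. split; [|split].
  - apply Forall_forall. intros z Hz. apply nodup_In in Hz.
    apply (proj1 (Forall_forall _ _)) with (x := z) (2 := Hz), Forall_app; auto.
  - intros z Hz. apply nodup_In, in_or_app; auto.
  - intros z Hz. apply nodup_In, in_or_app; auto.
Qed.

Section UnconditionalSums.

Variable P : R -> Prop.

Lemma has_usum_approx x L eps : has_usum P x L -> 0 < eps ->
  exists F, NoDup F /\ Forall P F /\ Rabs (lsum x F - L) < eps.
Proof.
  intros HL He. destruct (HL eps He) as [F0 [N0 [P0 Q0]]].
  exists F0. split; [|split]; auto. apply Q0; auto. apply incl_refl.
Qed.

Lemma has_usum_le x L M : has_usum P x L ->
  (forall F, NoDup F -> Forall P F -> lsum x F <= M) -> L <= M.
Proof.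
  intros HL HM. apply Rle_plus_epsilon. intros eps He.
  destruct (has_usum_approx x L eps HL He) as [F [NF [PF Q]]].
  specialize (HM F NF PF). apply Rabs_def2 in Q. lra.
Qed.

Lemma has_usum_ge0 x L : has_usum P x L -> (forall z, P z -> 0 <= x z) -> 0 <= L.
Proof.
  intros HL Hx. apply Rle_plus_epsilon. intros eps He.
  destruct (has_usum_approx x L eps HL He) as [F [NF [PF Q]]].
  assert (0 <= lsum x F).
  { apply lsum_nonneg. intros z Hz. apply Hx. exact (proj1 (Forall_forall _ _) PF z Hz). }
  apply Rabs_def2 in Q. lra.
Qed.

Lemma has_usum_ext x y L : (forall z, P z -> x z = y z) -> has_usum P x L -> has_usum P y L.
Proof.
  intros E HL eps He. destruct (HL eps He) as [F0 [N0 [P0 Q]]].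
  exists F0. split; [|split]; auto. intros F NF PF I.
  fold (lsum y F). rewrite <- (lsum_ext x y F); [apply Q; auto|].
  intros z Hz. apply E. exact (proj1 (Forall_forall _ _) PF z Hz).
Qed.

Lemma has_usum_lincomb x y L1 L2 c d : has_usum P x L1 -> has_usum P y L2 ->
  has_usum P (fun z => c * x z + d * y z) (c * L1 + d * L2).
Proof.
  intros H1 H2 eps He.
  set (K := Rabs c + Rabs d + 1).
  assert (HK : 0 < K) by (unfold K; pose proof (Rabs_pos c); pose proof (Rabs_pos d); lra).
  assert (He' : 0 < eps / K) by (apply Rdiv_lt_0_compat; lra).
  destruct (H1 _ He') as [F1 [N1 [P1 Q1]]]. destruct (H2 _ He') as [F2 [N2 [P2 Q2]]].
  destruct (common_NoDup_superlist P F1 F2 P1 P2) as [F0 [N0 [P0 [I1 I2]]]].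
  exists F0. split; [|split]; auto. intros F NF PF I.
  specialize (Q1 F NF PF (incl_tran I1 I)). specialize (Q2 F NF PF (incl_tran I2 I)).
  fold (lsum (fun z => c * x z + d * y z) F) (lsum x F) (lsum y F) in *.
  rewrite lsum_lincomb.
  replace (c * lsum x F + d * lsum y F - (c * L1 + d * L2))
    with (c * (lsum x F - L1) + d * (lsum y F - L2)) by ring.
  eapply Rle_lt_trans; [apply Rabs_triang|]. rewrite !Rabs_mult.
  assert (Rabs c * Rabs (lsum x F - L1) <= Rabs c * (eps / K))
    by (apply Rmult_le_compat_l; [apply Rabs_pos|lra]).
  assert (Rabs d * Rabs (lsum y F - L2) <= Rabs d * (eps / K))
    by (apply Rmult_le_compat_l; [apply Rabs_pos|lra]).
  assert (eps = K * (eps / K)) by (field; lra).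
  unfold K in *. nra.
Qed.

Lemma has_usum_scal x L c : has_usum P x L -> has_usum P (fun z => c * x z) (c * L).
Proof.
  intros HL. replace (c * L) with (c * L + 0 * L) by ring.
  apply (has_usum_ext (fun z => c * x z + 0 * x z)); [intros; ring|].
  apply has_usum_lincomb; auto.
Qed.

Lemma has_usum_abs_le x y A B : has_usum P x A -> has_usum P y B ->
  (forall z, P z -> Rabs (x z) <= y z) -> Rabs A <= B.
Proof.
  intros HA HB Hxy. apply Rabs_le.
  assert (0 <= 1 * B + 1 * A).
  { apply (has_usum_ge0 (fun z => 1 * y z + 1 * x z)); [apply has_usum_lincomb; auto|].
    intros z Hz. specialize (Hxy z Hz). pose proof (Rle_abs (x z)); pose proof (Rabs_Ropp (x z)); pose proof (Rle_abs (- x z)); lra. }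
  assert (0 <= 1 * B + -1 * A).
  { apply (has_usum_ge0 (fun z => 1 * y z + -1 * x z)); [apply has_usum_lincomb; auto|].
    intros z Hz. specialize (Hxy z Hz). pose proof (Rle_abs (x z)); pose proof (Rabs_Ropp (x z)); pose proof (Rle_abs (- x z)); lra. }
  lra.
Qed.

(* The supremum of the finite partial sums is the sum: partial sums grow along [incl]. *)
Lemma has_usum_of_bounded x M : (forall z, P z -> 0 <= x z) ->
  (forall F, NoDup F -> Forall P F -> lsum x F <= M) -> exists S, has_usum P x S.
Proof.
  intros Hx HM.
  set (E := fun v => exists F, NoDup F /\ Forall P F /\ v = lsum x F).
  assert (Hb : bound E) by (exists M; intros v [F [NF [PF ->]]]; auto).
  assert (Hn : exists v, E v) by (exists 0, []; repeat constructor).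
  destruct (completeness E Hb Hn) as [S [Hub Hlub]].
  exists S. intros eps He.
  assert (Hnear : exists F0, NoDup F0 /\ Forall P F0 /\ S - eps < lsum x F0).
  { apply Classical_Prop.NNPP. intro N.
    enough (S <= S - eps) by lra.
    apply Hlub. intros v [F [NF [PF ->]]].
    apply Rnot_lt_le. intro Hlt. apply N. exists F; auto. }
  destruct Hnear as [F0 [N0 [P0 H0]]]. exists F0. split; [|split]; auto.
  intros F NF PF I.
  assert (lsum x F0 <= lsum x F).
  { apply lsum_incl_le; auto. intros z Hz. apply Hx. exact (proj1 (Forall_forall _ _) PF z Hz). }
  assert (lsum x F <= S) by (apply Hub; exists F; auto).
  fold (lsum x F). apply Rabs_def1; lra.
Qed.

End UnconditionalSums.

Lemma has_usum_interval_diff a s t x A B : a <= s -> s <= t ->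
  has_usum (fun z => a <= z < t) x A -> has_usum (fun z => a <= z < s) x B ->
  has_usum (fun z => s <= z < t) x (A - B).
Proof.
  intros Has Hst HA HB eps He.
  assert (He2 : 0 < eps / 2) by lra.
  destruct (HA _ He2) as [F1 [N1 [P1 Q1]]]. destruct (HB _ He2) as [F2 [N2 [P2 Q2]]].
  set (above := fun z => if Rlt_dec z s then false else true).
  set (below := fun z => negb (above z)).
  assert (Habove : forall z, above z = true <-> s <= z).
  { intro z. unfold above. destruct (Rlt_dec z s); split; intro; try discriminate; lra. }
  assert (Hbelow : forall z, below z = true <-> z < s).
  { intro z. unfold below, above. destruct (Rlt_dec z s); cbn; split; intro; try discriminate; lra. }
  rewrite Forall_forall in P1, P2.
  exists (filter above F1). split; [apply NoDup_filter; auto|]. split.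
  { apply Forall_forall. intros z Hz. apply filter_In in Hz as [Hz Ha].
    apply Habove in Ha. specialize (P1 z Hz). lra. }
  intros F NF PF I. rewrite Forall_forall in PF.
  set (Fs := nodup Req_EM_T (filter below F1 ++ F2)).
  assert (PFs : forall z, In z Fs -> a <= z < s).
  { intros z Hz. apply nodup_In, in_app_or in Hz as [Hz|Hz].
    - apply filter_In in Hz as [Hz Hb]. apply Hbelow in Hb. specialize (P1 z Hz). lra.
    - auto. }
  assert (QB : Rabs (lsum x Fs - B) < eps / 2).
  { apply Q2; [apply NoDup_nodup | apply Forall_forall; exact PFs |].
    intros z Hz. apply nodup_In, in_or_app; auto. }
  assert (QA : Rabs (lsum x (F ++ Fs) - A) < eps / 2).
  { apply Q1.
    - apply NoDup_app; [exact NF | apply NoDup_nodup |].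
      intros z Hz Hz'. specialize (PF z Hz). specialize (PFs z Hz'). lra.
    - apply Forall_forall. intros z Hz. apply in_app_or in Hz as [Hz|Hz].
      + specialize (PF z Hz). lra.
      + specialize (PFs z Hz). lra.
    - intros z Hz. apply in_or_app.
      destruct (Rlt_dec z s) as [Hlt|Hge].
      + right. apply nodup_In, in_or_app. left. apply filter_In. split; auto. apply Hbelow; auto.
      + left. apply I, filter_In. split; auto. apply Habove. lra. }
  rewrite lsum_app in QA. fold (lsum x F).
  apply Rabs_def2 in QA, QB. apply Rabs_def1; lra.
Qed.

Lemma is_right_lim_lincomb b u v w x Lu Lv c d :
  (forall z, w z = c * u z + d * v z) ->
  is_right_lim b u x Lu -> is_right_lim b v x Lv -> is_right_lim b w x (c * Lu + d * Lv).
Proof.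
  intros Ew Hu Hv eps He.
  set (K := Rabs c + Rabs d + 1).
  assert (HK : 0 < K) by (unfold K; pose proof (Rabs_pos c); pose proof (Rabs_pos d); lra).
  assert (He' : 0 < eps / K) by (apply Rdiv_lt_0_compat; lra).
  destruct (Hu _ He') as [du [Hdu Pu]]. destruct (Hv _ He') as [dv [Hdv Pv]].
  exists (Rmin du dv). split; [apply Rmin_pos; lra|].
  intros z Hz Hzb.
  pose proof (Rmin_l du dv). pose proof (Rmin_r du dv).
  specialize (Pu z ltac:(lra) Hzb). specialize (Pv z ltac:(lra) Hzb).
  rewrite Ew.
  replace (c * u z + d * v z - (c * Lu + d * Lv)) with (c * (u z - Lu) + d * (v z - Lv)) by ring.
  eapply Rle_lt_trans; [apply Rabs_triang|]. rewrite !Rabs_mult.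
  assert (Rabs c * Rabs (u z - Lu) <= Rabs c * (eps / K))
    by (apply Rmult_le_compat_l; [apply Rabs_pos|lra]).
  assert (Rabs d * Rabs (v z - Lv) <= Rabs d * (eps / K))
    by (apply Rmult_le_compat_l; [apply Rabs_pos|lra]).
  assert (eps = K * (eps / K)) by (field; lra).
  unfold K in *. nra.
Qed.

Lemma is_right_lim_unique b phi x L1 L2 : x < b ->
  is_right_lim b phi x L1 -> is_right_lim b phi x L2 -> L1 = L2.
Proof.
  intros Hxb H1 H2. apply cond_eq. intros eps He.
  destruct (H1 (eps / 2) ltac:(lra)) as [d1 [Hd1 P1]].
  destruct (H2 (eps / 2) ltac:(lra)) as [d2 [Hd2 P2]].
  set (z := Rmin (x + Rmin d1 d2 / 2) b).
  pose proof (Rmin_l d1 d2). pose proof (Rmin_r d1 d2). pose proof (Rmin_pos d1 d2 Hd1 Hd2).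
  assert (x < z) by (unfold z; apply Rmin_glb_lt; lra).
  assert (z <= x + Rmin d1 d2 / 2) by apply Rmin_l.
  assert (z <= b) by apply Rmin_r.
  specialize (P1 z ltac:(lra) ltac:(lra)). specialize (P2 z ltac:(lra) ltac:(lra)).
  replace (L1 - L2) with ((phi z - L2) - (phi z - L1)) by ring.
  eapply Rle_lt_trans; [apply Rabs_triang|]. rewrite Rabs_Ropp. lra.
Qed.

Lemma right_lim_eq b phi x L : x < b -> is_right_lim b phi x L -> right_lim b phi x = L.
Proof.
  intros Hxb HL. apply (is_right_lim_unique b phi x); auto.
  unfold right_lim. apply epsilon_spec. exists L; exact HL.
Qed.

Lemma right_jump_lincomb b u v w x Lu Lv c d : x < b ->
  (forall z, w z = c * u z + d * v z) ->
  is_right_lim b u x Lu -> is_right_lim b v x Lv ->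
  right_jump b w x = c * right_jump b u x + d * right_jump b v x.
Proof.
  intros Hxb Ew Hu Hv. unfold right_jump.
  rewrite (right_lim_eq b w x _ Hxb (is_right_lim_lincomb b u v w x Lu Lv c d Ew Hu Hv)).
  rewrite (right_lim_eq b u x _ Hxb Hu), (right_lim_eq b v x _ Hxb Hv), Ew. ring.
Qed.

Section Nondecreasing.

Variables (a b : R) (U : R -> R).
Hypothesis HU : nondecreasing_on a b U.

Lemma nondecreasing_is_right_lim x : a <= x < b -> is_right_lim b U x (right_lim b U x).
Proof.
  intros Hx. unfold right_lim. apply epsilon_spec.
  set (E := fun v => exists y, x < y <= b /\ v = - U y).
  assert (Hb : bound E).
  { exists (- U x). intros v [y [Hy ->]]. assert (U x <= U y) by (apply HU; lra). lra. }
  assert (Hn : exists v, E v) by (exists (- U b), b; split; [lra|auto]).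
  destruct (completeness E Hb Hn) as [m [Hub Hlub]].
  exists (- m). intros eps He.
  assert (Hnear : exists y, x < y <= b /\ m - eps < - U y).
  { apply Classical_Prop.NNPP. intro N.
    enough (m <= m - eps) by lra.
    apply Hlub. intros v [y [Hy ->]].
    apply Rnot_lt_le. intro Hlt. apply N. exists y; auto. }
  destruct Hnear as [y [Hy Hmy]].
  exists (y - x). split; [lra|]. intros z Hz Hzb.
  assert (U z <= U y) by (apply HU; lra).
  assert (- U z <= m) by (apply Hub; exists z; split; [lra|auto]).
  apply Rabs_def1; lra.
Qed.

Lemma right_lim_le x y : a <= x -> x < y -> y <= b -> right_lim b U x <= U y.
Proof.
  intros Hax Hxy Hyb. apply Rnot_lt_le. intro Hlt.
  destruct (nondecreasing_is_right_lim x ltac:(lra) (right_lim b U x - U y) ltac:(lra))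
    as [d [Hd P]].
  set (z := Rmin (x + d / 2) y).
  assert (x < z) by (unfold z; apply Rmin_glb_lt; lra).
  assert (z <= x + d / 2) by apply Rmin_l.
  assert (z <= y) by apply Rmin_r.
  specialize (P z ltac:(lra) ltac:(lra)).
  assert (U z <= U y) by (apply HU; lra).
  apply Rabs_def2 in P. lra.
Qed.

Lemma right_jump_ge0 x : a <= x < b -> 0 <= right_jump b U x.
Proof.
  intros Hx. unfold right_jump. apply Rge_le, Rge_minus, Rle_ge, Rnot_lt_le. intro Hlt.
  destruct (nondecreasing_is_right_lim x Hx (U x - right_lim b U x) ltac:(lra)) as [d [Hd P]].
  set (z := Rmin (x + d / 2) b).
  assert (x < z) by (unfold z; apply Rmin_glb_lt; lra).
  assert (z <= x + d / 2) by apply Rmin_l.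
  assert (z <= b) by apply Rmin_r.
  specialize (P z ltac:(lra) ltac:(lra)).
  assert (U x <= U z) by (apply HU; lra).
  apply Rabs_def2 in P. lra.
Qed.

(* Remove the largest point m: the other points lie in [s, m), and the jump at m is at most U t - U m. *)
Lemma lsum_right_jump_le G s t : NoDup G -> Forall (fun z => s <= z < t) G ->
  a <= s -> s <= t -> t <= b -> lsum (right_jump b U) G <= U t - U s.
Proof.
  remember (length G) as n eqn:Hn. revert G t Hn.
  induction n as [n IH] using lt_wf_ind. intros G t Hn NG PG Has Hst Htb.
  rewrite Forall_forall in PG.
  destruct G as [|z0 G'].
  - cbn. assert (U s <= U t) by (apply HU; lra). lra.
  - destruct (exists_max_in (z0 :: G') ltac:(discriminate)) as [m [Hm Hmax]].
    destruct (in_split m _ Hm) as [l1 [l2 Hsplit]]. rewrite Hsplit in *.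
    apply NoDup_remove in NG as [NG Nm].
    assert (Hrest : lsum (right_jump b U) (l1 ++ l2) <= U m - U s).
    { apply (IH (length (l1 ++ l2))); auto.
      - rewrite Hn, !length_app. cbn. lia.
      - apply Forall_forall. intros z Hz.
        assert (HzG : In z (l1 ++ m :: l2)) by (apply in_app_or in Hz; apply in_or_app; cbn; tauto).
        specialize (PG z HzG). specialize (Hmax z HzG).
        assert (z <> m) by (intro; subst; contradiction).
        lra.
      - specialize (PG m Hm). lra.
      - specialize (PG m Hm). lra. }
    rewrite lsum_app in Hrest |- *.
    specialize (PG m Hm).
    assert (right_lim b U m <= U t) by (apply right_lim_le; lra).
    assert (right_jump b U m <= U t - U m) by (unfold right_jump; lra).
    unfold lsum in *. cbn. lra.
Qed.

Lemma has_usum_right_jump_le s t D : a <= s -> s <= t -> t <= b ->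
  has_usum (fun z => s <= z < t) (right_jump b U) D -> D <= U t - U s.
Proof.
  intros Has Hst Htb HD. apply (has_usum_le _ _ _ _ HD).
  intros F NF PF. apply lsum_right_jump_le; auto.
Qed.

Lemma jump_part_has_usum t : a <= t <= b ->
  has_usum (fun z => a <= z < t) (right_jump b U) (jump_part a b U t).
Proof.
  intros Ht. unfold jump_part. apply epsilon_spec.
  apply (has_usum_of_bounded _ _ (U t - U a)).
  - intros z Hz. apply right_jump_ge0. lra.
  - intros F NF PF. apply lsum_right_jump_le; auto; lra.
Qed.

Lemma jump_part_diff_has_usum s t : a <= s -> s <= t -> t <= b ->
  has_usum (fun z => s <= z < t) (right_jump b U) (jump_part a b U t - jump_part a b U s).
Proof.
  intros Has Hst Htb.
  apply (has_usum_interval_diff a); auto; apply jump_part_has_usum; lra.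
Qed.

End Nondecreasing.

Lemma v_lipschitz_of_ordered a b u v H :
  (forall s t, a <= s -> s <= t -> t <= b -> Rabs (u t - u s) <= H * Rabs (v t - v s)) ->
  v_lipschitz a b u v H.
Proof.
  intros Hord t s Ht Hs. destruct (Rle_dec s t).
  - apply Hord; lra.
  - rewrite (Rabs_minus_sym (u t)), (Rabs_minus_sym (v t)). apply Hord; lra.
Qed.

Section LipschitzJumps.

Variables (a b H : R) (f g : R -> R).
Hypothesis Hg : nondecreasing_on a b g.
Hypothesis Hf : v_lipschitz a b f g H.

Lemma lipschitz_lincomb_nondecreasing c : Rabs c <= 1 ->
  nondecreasing_on a b (fun z => H * g z + c * f z).
Proof.
  intros Hc s t Has Hst Htb.
  assert (Hgst : g s <= g t) by (apply Hg; lra).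
  assert (Hfst : Rabs (f t - f s) <= H * (g t - g s)).
  { rewrite <- (Rabs_right (g t - g s)) by lra. apply Hf; lra. }
  assert (c * (f s - f t) <= Rabs (f t - f s)).
  { eapply Rle_trans; [apply Rle_abs|]. rewrite Rabs_mult, Rabs_minus_sym.
    pose proof (Rabs_pos (f t - f s)). nra. }
  lra.
Qed.

Let U (c : R) : R -> R := fun z => H * g z + c * f z.

Lemma lipschitz_is_right_lim x : a <= x < b -> is_right_lim b f x (right_lim b f x).
Proof.
  intros Hx. unfold right_lim. apply epsilon_spec.
  exists (1 * right_lim b (U 1) x + (- H) * right_lim b g x).
  apply (is_right_lim_lincomb b (U 1) g).
  - intro z. unfold U. ring.
  - apply (nondecreasing_is_right_lim a); auto.
    apply lipschitz_lincomb_nondecreasing. rewrite Rabs_R1. lra.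
  - apply (nondecreasing_is_right_lim a); auto.
Qed.

Lemma lipschitz_right_jump_lincomb c x : a <= x < b ->
  right_jump b (U c) x = H * right_jump b g x + c * right_jump b f x.
Proof.
  intros Hx. apply (right_jump_lincomb b g f (U c) x (right_lim b g x) (right_lim b f x)); try lra.
  - reflexivity.
  - apply (nondecreasing_is_right_lim a); auto.
  - apply lipschitz_is_right_lim; auto.
Qed.

Lemma lipschitz_right_jump_le x : a <= x < b -> Rabs (right_jump b f x) <= H * right_jump b g x.
Proof.
  intros Hx.
  assert (J1 := right_jump_ge0 a b (U 1)
                  (lipschitz_lincomb_nondecreasing 1 ltac:(rewrite Rabs_R1; lra)) x Hx).
  assert (Jm1 := right_jump_ge0 a b (U (-1))
                  (lipschitz_lincomb_nondecreasing (-1) ltac:(rewrite Rabs_left; lra)) x Hx).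
  rewrite lipschitz_right_jump_lincomb in J1, Jm1 by auto.
  apply Rabs_le. lra.
Qed.

Lemma lipschitz_jump_part_has_usum t : a <= t <= b ->
  has_usum (fun z => a <= z < t) (right_jump b f) (jump_part a b f t).
Proof.
  intros Ht. unfold jump_part. apply epsilon_spec.
  assert (HU : nondecreasing_on a b (U (-1)))
    by (apply lipschitz_lincomb_nondecreasing; rewrite Rabs_left; lra).
  exists (H * jump_part a b g t + (-1) * jump_part a b (U (-1)) t).
  apply (has_usum_ext _ (fun z => H * right_jump b g z + (-1) * right_jump b (U (-1)) z)).
  - intros z Hz. rewrite lipschitz_right_jump_lincomb by lra. ring.
  - apply has_usum_lincomb; apply jump_part_has_usum; auto.
Qed.

Lemma lipschitz_jump_part_diff s t : a <= s -> s <= t -> t <= b ->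
  has_usum (fun z => s <= z < t) (right_jump b f) (jump_part a b f t - jump_part a b f s).
Proof.
  intros Has Hst Htb.
  apply (has_usum_interval_diff a); auto; apply lipschitz_jump_part_has_usum; lra.
Qed.

Lemma jump_part_lipschitz : v_lipschitz a b (jump_part a b f) (jump_part a b g) H.
Proof.
  apply v_lipschitz_of_ordered. intros s t Has Hst Htb.
  assert (Df := lipschitz_jump_part_diff s t Has Hst Htb).
  assert (Dg := jump_part_diff_has_usum a b g Hg s t Has Hst Htb).
  assert (Dg_ge0 : 0 <= jump_part a b g t - jump_part a b g s).
  { apply (has_usum_ge0 _ _ _ Dg). intros z Hz. apply (right_jump_ge0 a); auto; lra. }
  rewrite (Rabs_right (jump_part a b g t - jump_part a b g s)) by lra.
  apply (has_usum_abs_le _ _ _ _ _ Df (has_usum_scal _ _ _ H Dg)).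
  intros z Hz. apply lipschitz_right_jump_le. lra.
Qed.

Lemma cont_part_lipschitz : nondecreasing_on a b f ->
  v_lipschitz a b (cont_part a b f) (cont_part a b g) H.
Proof.
  intros Hf_incr. apply v_lipschitz_of_ordered. intros s t Has Hst Htb. unfold cont_part.
  assert (Df := lipschitz_jump_part_diff s t Has Hst Htb).
  assert (Dg := jump_part_diff_has_usum a b g Hg s t Has Hst Htb).
  set (DF := jump_part a b f t - jump_part a b f s) in *.
  set (DG := jump_part a b g t - jump_part a b g s) in *.
  assert (DF_le : DF <= f t - f s) by (apply (has_usum_right_jump_le a b f); auto).
  assert (DG_le : DG <= g t - g s) by (apply (has_usum_right_jump_le a b g); auto).
  assert (DU_le : H * DG + (-1) * DF <= U (-1) t - U (-1) s).
  { apply (has_usum_right_jump_le a b (U (-1))); auto.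
    - apply lipschitz_lincomb_nondecreasing. rewrite Rabs_left; lra.
    - apply (has_usum_ext _ (fun z => H * right_jump b g z + (-1) * right_jump b f z)).
      + intros z Hz. rewrite lipschitz_right_jump_lincomb by lra. reflexivity.
      + apply has_usum_lincomb; auto. }
  unfold U in DU_le.
  replace (f t - jump_part a b f t - (f s - jump_part a b f s)) with (f t - f s - DF)
    by (unfold DF; ring).
  replace (g t - jump_part a b g t - (g s - jump_part a b g s)) with (g t - g s - DG)
    by (unfold DG; ring).
  rewrite Rabs_right, (Rabs_right (g t - g s - DG)) by lra.
  lra.
Qed.

End LipschitzJumps.

Theorem mainTheorem4 (a b H : R) (f g : R -> R)
  (Hg_incr : nondecreasing_on a b g)
  (Hg_left : forall t, a < t < b -> left_continuous_at g t)
  (Hf : v_lipschitz a b f g H) :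
  v_lipschitz a b (jump_part a b f) (jump_part a b g) H /\
  (nondecreasing_on a b f ->
   v_lipschitz a b (cont_part a b f) (cont_part a b g) H).
Proof.
  split.
  - exact (jump_part_lipschitz a b H f g Hg_incr Hf).
  - exact (cont_part_lipschitz a b H f g Hg_incr Hf).
Qed.
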